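(* Let $\Gamma\subset\mathbb{R}^2$ be an arbitrary polygon, i.e. a finite union of straight line segments. Then there exists a set $A\subset\mathbb{R}^2$ of full Lebesgue measure such that $A+\Gamma$ has empty interior.
   Context: $X+Y=\{x+y:x\in X,y\in Y\}$; ''full measure'' means the complement has two-dimensional Lebesgue measure zero. *)

From HB Require Import structures.
From mathcomp Require Import all_boot all_order all_algebra.
From mathcomp Require Import all_classical all_reals all_analysis.
Set Implicit Arguments. Unset Strict Implicit. Unset Printing Implicit Defensive.
Import Order.TTheory GRing.Theory Num.Theory.
Import numFieldNormedType.Exports.
Local Open Scope classical_set_scope.
Local Open Scope ring_scope.

(* Points of R^2 are pairs (R * R), with the product topology and the
   product sigma-algebra; 2-d Lebesgue measure is the product of 1-d
   Lebesgue measures. *)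

Definition segment (R : realType) (a b : R * R) : set (R * R) :=
  [set z | exists2 t : R, (0 <= t <= 1) &
     z = ((1 - t) * a.1 + t * b.1, (1 - t) * a.2 + t * b.2)].

Definition polygon (R : realType) (G : set (R * R)) : Prop :=
  exists s : seq ((R * R) * (R * R)),
    G = [set z | exists2 p, p \in s & segment p.1 p.2 z].

Definition minkowski_sum (R : realType) (X Y : set (R * R)) : set (R * R) :=
  [set z | exists x, exists y, [/\ X x, Y y & z = (x.1 + y.1, x.2 + y.2)]].

Definition lebesgue2 (R : realType) : set (R * R) -> \bar R :=
  ((@lebesgue_measure R) \x (@lebesgue_measure R))%E.
Arguments lebesgue2 R : clear implicits.

From HB Require Import structures.
From mathcomp Require Import all_boot all_order all_algebra.
From mathcomp Require Import all_classical all_reals all_analysis.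
From mathcomp Require Import measurable_realfun ring lra.
Import Order.TTheory GRing.Theory Num.Theory.
Import numFieldNormedType.Exports.
Local Open Scope classical_set_scope.
Local Open Scope ring_scope.

(* Segments lie on lines, so a polygon Gamma is null, and so is every set
   q - Gamma.  Removing the countably many sets q - Gamma with q in Q^2 leaves
   a set A of full measure such that A + Gamma misses Q^2 (x + g = q would put
   x in q - Gamma); a set missing a dense set has empty interior. *)

Definition minus_set {R : realType} (q : R * R) (G : set (R * R)) :
    set (R * R) :=
  [set x | G (q.1 - x.1, q.2 - x.2)].

Section polygons.
Variable R : realType.
(* Unfolded form of [lebesgue2 R], on which the measure structure needed by
   the negligibility lemmas is inferred. *)
Local Notation leb2 := (@lebesgue_measure R \x @lebesgue_measure R)%E.

Lemma graph_negligible (f : R -> R) : measurable_fun setT f ->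
  (lebesgue2 R).-negligible [set z : R * R | z.2 = f z.1].
Proof.
move=> mf; pose g z := z.2 - f z.1.
have mg : measurable_fun setT g.
  apply: measurable_funB; first exact: measurable_snd.
  exact: measurableT_comp mf measurable_fst.
have graphE : [set z : R * R | z.2 = f z.1] = g @^-1` [set 0].
  apply/seteqP; split => z /=; rewrite /g; first by move=> ->; rewrite subrr.
  by move/eqP; rewrite subr_eq0 => /eqP.
have mgraph : measurable [set z : R * R | z.2 = f z.1].
  by rewrite graphE -[X in measurable X]setTI; exact: mg.
apply/(negligibleP leb2 mgraph)/integral0_eq => x _ /=.
have -> : xsection [set z : R * R | z.2 = f z.1] x = [set f x].
  by apply/seteqP; split => y; rewrite /xsection /= inE.
exact: lebesgue_measure_set1.
Qed.

Lemma vertical_line_negligible (c : R) :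
  (lebesgue2 R).-negligible [set z : R * R | z.1 = c].
Proof.
have -> : [set z : R * R | z.1 = c] = [set c] `*` setT.
  by apply/seteqP; split => z /=; [move=> ->|case].
have mline : measurable ([set c] `*` [set: R]).
  by apply: measurableX => //; exact: measurable_set1.
apply/(negligibleP leb2 mline).
transitivity (lebesgue_measure [set c] * lebesgue_measure [set: R])%E.
  by apply: product_measure1E => //; exact: measurable_set1.
by rewrite lebesgue_measure_set1 mul0e.
Qed.

Lemma segment_negligible (a b : R * R) :
  (lebesgue2 R).-negligible (segment a b).
Proof.
have [e|ne] := eqVneq a.1 b.1.
  apply: (negligibleS (mu := leb2)) (vertical_line_negligible a.1).
  by move=> z [t _ ->] /=; rewrite -e; ring.
pose k := (b.2 - a.2) / (b.1 - a.1).
have maffine : measurable_fun setT (fun x => k * x + (a.2 - k * a.1)).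
  by apply: measurable_funD => //; exact: measurable_funM.
apply: (negligibleS (mu := leb2)) (graph_negligible _ maffine) => z [t _ ->] /=.
by rewrite /k; field; rewrite subr_eq0 eq_sym.
Qed.

Lemma polygon_negligible (G : set (R * R)) :
  polygon G -> (lebesgue2 R).-negligible G.
Proof.
move=> [s ->]; elim: s => [|p s IHs].
  apply: (negligibleS (mu := leb2)) (negligible_set0 leb2).
  by move=> z [p]; rewrite in_nil.
have := negligibleU (mu := leb2) (segment_negligible p.1 p.2) IHs.
apply: (negligibleS (mu := leb2)) => z [p'].
by rewrite in_cons => /orP[/eqP -> | p's] seg_z; [left | right; exists p'].
Qed.

Lemma minus_set_segment (q a b : R * R) :
  minus_set q (segment a b) =
  segment (q.1 - a.1, q.2 - a.2) (q.1 - b.1, q.2 - b.2).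
Proof.
apply/seteqP; split => -[x1 x2] [t t01] /= [E1 E2]; exists t => //=.
- by congr pair; lra.
- by rewrite E1 E2; congr pair; ring.
Qed.

Lemma polygon_minus_set (q : R * R) (G : set (R * R)) :
  polygon G -> polygon (minus_set q G).
Proof.
pose qminus (a : R * R) := (q.1 - a.1, q.2 - a.2).
move=> [s ->]; exists [seq (qminus p.1, qminus p.2) | p <- s].
apply/seteqP; split => x.
- move=> [p ps seg_p]; exists (qminus p.1, qminus p.2); first exact: map_f.
  by rewrite /= /qminus -minus_set_segment.
- move=> [_ /mapP[p ps ->]]; rewrite /= /qminus -minus_set_segment => seg_p.
  by exists p.
Qed.

Lemma bigcup_minus_set_negligible (q : nat -> R * R) (G : set (R * R)) :
  polygon G -> (lebesgue2 R).-negligible (\bigcup_n minus_set (q n) G).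
Proof.
move=> polyG; apply: (negligible_bigcup (mu := leb2)) => n.
exact/polygon_negligible/polygon_minus_set.
Qed.

End polygons.

Definition rat_point {R : realType} (n : nat) : R * R :=
  if @unpickle (rat * rat)%type n is Some r then (ratr r.1, ratr r.2)
  else (0, 0).

Section rational_points.
Variable R : realType.

Lemma ratr_dist_lt (x : R) {e : R} :
  0 < e -> exists r : rat, `|x - ratr r| < e.
Proof.
move=> e0; have /rat_in_itvoo[r] : x - e < x + e by lra.
by rewrite in_itv /= => xr; exists r; rewrite ltr_distlC.
Qed.

Lemma dense_rat_points : dense (range (@rat_point R)).
Proof.
move=> O [z Oz] oO; have /nbhs_ballP[e /= e0 zeO] := oO z Oz.
have [r1 zr1] := ratr_dist_lt z.1 e0; have [r2 zr2] := ratr_dist_lt z.2 e0.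
exists (ratr r1, ratr r2); split; first by apply: zeO; split.
by exists (pickle (r1, r2)) => //; rewrite /rat_point pickleK.
Qed.

End rational_points.

Lemma interior_eq0_disjoint_dense {T : topologicalType} {D S : set T} :
  dense D -> S `&` D = set0 -> interior S = set0.
Proof.
move=> dD SD0; apply/seteqP; split => // x Sx.
have [y [Sy Dy]] := dD _ (ex_intro _ x Sx) (@open_interior _ S).
suff : (S `&` D) y by rewrite SD0.
by split => //; exact: interior_subset.
Qed.

Lemma minkowski_sum_minus_set (R : realType) (A G : set (R * R)) (q : R * R) :
  minkowski_sum A G q -> exists2 x, A x & minus_set q G x.
Proof.
move=> [x [g [Ax Gg ->]]]; exists x => //; rewrite /minus_set /=.
by rewrite [x.1 + _]addrC [x.2 + _]addrC !addrK -surjective_pairing.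
Qed.

Theorem mainTheorem11 (R : realType) (G : set (R * R)) :
  polygon G ->
  exists A : set (R * R),
    (lebesgue2 R).-negligible (~` A) /\ interior (minkowski_sum A G) = set0.
Proof.
move=> polyG; pose B := \bigcup_n minus_set (rat_point n) G.
exists (~` B); split.
  by rewrite setCK; exact: bigcup_minus_set_negligible.
apply: (interior_eq0_disjoint_dense (dense_rat_points R)).
apply/seteqP; split => // q [/minkowski_sum_minus_set[x notBx Gqx] [n _ qn]].
by apply: notBx; exists n => //; rewrite qn.
Qed.
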